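(* Let $m>4$ and let $\lambda=(\boldsymbol\lambda_1,\ldots,\boldsymbol\lambda_m)$ be a characteristic matrix on the convex $m$-gon with edges $F_1,\ldots,F_m$ numbered cyclically. Then $\lambda$ decomposes as a connected sum of characteristic matrices on two convex polygons; that is, there exist $1\le i<j\le m$ with $F_i\cap F_j=\emptyset$ and $\det(\boldsymbol\lambda_i,\boldsymbol\lambda_j)=\pm1$, so that $(\boldsymbol\lambda_i,\boldsymbol\lambda_{i+1},\ldots,\boldsymbol\lambda_j)$ is a characteristic matrix on the convex $(j-i+1)$-gon, $(\boldsymbol\lambda_j,\ldots,\boldsymbol\lambda_m,\boldsymbol\lambda_1,\ldots,\boldsymbol\lambda_i)$ is a characteristic matrix on the convex $(m-j+i+1)$-gon, and $\lambda$ is their connected sum.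
   Context: The edges (facets) $F_1,\ldots,F_m$ of the convex $m$-gon are numbered clockwise, so $F_i\cap F_{i+1}\neq\emptyset$ (indices mod $m$) and these are the only intersecting pairs of distinct edges. A characteristic matrix on the convex $m$-gon is an integer $2\times m$ matrix $(\boldsymbol\lambda_1,\ldots,\boldsymbol\lambda_m)$ with $\det(\boldsymbol\lambda_i,\boldsymbol\lambda_{i+1})=\pm1$ for all $i$ (indices mod $m$). Connected sum of characteristic matrices: the polygon is cut along a diagonal joining the vertices... more precisely, the $m$-gon is the connected sum of the two smaller polygons glued along the two common edges $F_i,F_j$, and the characteristic matrix of the connected sum agrees with each summand on the corresponding edges; the associated quasitoric manifold is then the connected sum of the two associated quasitoric manifolds. *)

From mathcomp Require Import all_boot all_order all_algebra.
Set Implicit Arguments. Unset Strict Implicit. Unset Printing Implicit Defensive.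
Import Order.TTheory GRing.Theory Num.Theory.
Local Open Scope ring_scope.

Definition det2 (a b : int * int) : int := a.1 * b.2 - a.2 * b.1.

(* A characteristic matrix on the convex (size s)-gon: the columns are listed
   cyclically (0-indexed), and consecutive columns (indices mod size s) have
   determinant +-1. *)
Definition char_matrix (s : seq (int * int)) : Prop :=
  forall k : nat, (k < size s)%N ->
    `|det2 (nth (0, 0) s k) (nth (0, 0) s ((k.+1) %% size s))| = 1.

(* Edges F_i and F_j (0-indexed, i < j < m) of the convex m-gon are disjoint
   iff they are not cyclically adjacent. *)
Definition edges_disjoint (m i j : nat) : Prop :=
  j <> i.+1 /\ ~ (i = 0%N /\ j = m.-1).

From mathcomp Require Import all_boot all_order all_algebra zify ring.
Import Order.TTheory GRing.Theory Num.Theory.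
Local Open Scope ring_scope.

(* Take a column q = lam_i of maximal Euclidean norm, with neighbours p and r.
   From det(p,r) q = det(q,r) p + det(p,q) r and |det(p,q)| = |det(q,r)| = 1 one
   gets det(p,r)^2 |q|^2 = |p|^2 + |r|^2 +- 2 <p,r>; if |det(p,r)| >= 2 this
   forces |<p,r>| >= |q|^2 >= |p| |r|, contradicting <p,r>^2 + det(p,r)^2 =
   |p|^2 |r|^2.  So either |det(p,r)| = 1 and the diagonal from p to r splits
   lam, or det(p,r) = 0, p = +-r, and the diagonal from p to the column after r
   splits lam; the latter is a diagonal because m > 4. *)

Lemma exists_nth_argmax {T : Type} (x0 : T) (F : T -> int) {s : seq T} :
  (0 < size s)%N ->
  exists2 i, (i < size s)%N &
    forall k, (k < size s)%N -> F (nth x0 s k) <= F (nth x0 s i).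
Proof.
move=> s_gt0.
case: (@arg_maxP _ _ _ (Ordinal s_gt0) xpredT
               (fun i : 'I_(size s) => F (nth x0 s i)) isT) => i _ max_i.
by exists i => // k k_lt; apply: (max_i (Ordinal k_lt)).
Qed.

Definition normv (v : int * int) : int := v.1 * v.1 + v.2 * v.2.
Definition dotv (u v : int * int) : int := u.1 * v.1 + u.2 * v.2.

Lemma det2C (u v : int * int) : `|det2 u v| = `|det2 v u|.
Proof. by rewrite /det2 -normrN opprB [u.1 * _]mulrC [u.2 * _]mulrC. Qed.

Lemma det2_cramer (p q r : int * int) :
  det2 p r * q.1 = det2 q r * p.1 + det2 p q * r.1 /\
  det2 p r * q.2 = det2 q r * p.2 + det2 p q * r.2.
Proof. by rewrite /det2; split; ring. Qed.

Lemma lagrange2 (u v : int * int) :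
  dotv u v ^+ 2 + det2 u v ^+ 2 = normv u * normv v.
Proof. by rewrite /dotv /det2 /normv; ring. Qed.

Lemma det2_cramer_norm (p q r : int * int) :
  det2 p r ^+ 2 * normv q =
  det2 q r ^+ 2 * normv p + det2 p q ^+ 2 * normv r
  + 2 * (det2 p q * det2 q r) * dotv p r.
Proof. by rewrite /det2 /normv /dotv; ring. Qed.

Lemma normv_ge0 (v : int * int) : 0 <= normv v.
Proof. rewrite /normv; nia. Qed.

Lemma sqr_norm1 {x : int} : `|x| = 1 -> x ^+ 2 = 1.
Proof. by move=> x1; rewrite -real_normK ?num_real // x1 expr1n. Qed.

Lemma det2_outer_le1 {p q r : int * int} :
  `|det2 p q| = 1 -> `|det2 q r| = 1 ->
  normv p <= normv q -> normv r <= normv q -> `|det2 p r| <= 1.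
Proof.
move=> pq qr p_le r_le.
have e1 : `|det2 p q * det2 q r| = 1 by rewrite normrM pq qr mulr1.
have := det2_cramer_norm p q r.
rewrite (sqr_norm1 pq) (sqr_norm1 qr) !mul1r.
have := lagrange2 p r; have := normv_ge0 p; have := normv_ge0 r.
move: (det2 p q * det2 q r) (det2 p r) (dotv p r) e1 => e d x e1.
move: (normv p) (normv q) (normv r) p_le r_le => np nq nr.
move=> p_le r_le nr0 np0 lagr cramer.
case: (lerP `|d| 1) => // d_big.
have d4 : 4 <= d ^+ 2.
  rewrite -real_normK ?num_real // expr2; have : 2 <= `|d| by lia.
  nia.
have : 4 * nq <= d ^+ 2 * nq by rewrite ler_wpM2r // (le_trans np0).
have ex_big : nq <= e * x by nia.
have : nq * nq <= x ^+ 2 by nia.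
nia.
Qed.

Lemma det2_collinear_outer {p q r : int * int} (s : int * int) :
  `|det2 p q| = 1 -> `|det2 q r| = 1 -> det2 p r = 0 ->
  `|det2 p s| = `|det2 r s|.
Proof.
move=> pq qr pr0.
have [c1 c2] := det2_cramer p q r; rewrite pr0 !mul0r in c1 c2.
have /eqP p1 : det2 q r * p.1 == - (det2 p q * r.1) by rewrite -addr_eq0 -c1.
have /eqP p2 : det2 q r * p.2 == - (det2 p q * r.2) by rewrite -addr_eq0 -c2.
have : det2 q r * det2 p s = - (det2 p q * det2 r s).
  have -> : det2 q r * det2 p s =
            (det2 q r * p.1) * s.2 - (det2 q r * p.2) * s.1 by rewrite /det2; ring.
  by rewrite p1 p2 /det2; ring.
by move/(congr1 Num.norm); rewrite normrN !normrM pq qr !mul1r.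
Qed.

Definition cnth (s : seq (int * int)) (k : nat) : int * int :=
  nth (0, 0) s (k %% size s).

Definition arc (s : seq (int * int)) (a n : nat) : seq (int * int) :=
  mkseq (fun k => cnth s (a + k)) n.

Lemma char_matrix_cnth (s : seq (int * int)) k : (0 < size s)%N ->
  char_matrix s -> `|det2 (cnth s k) (cnth s k.+1)| = 1.
Proof.
move=> s_gt0 cm_s; rewrite /cnth -addn1 -modnDml addn1.
by apply: cm_s; rewrite ltn_pmod.
Qed.

Lemma cnth_small (s : seq (int * int)) k : (k < size s)%N ->
  cnth s k = nth (0, 0) s k.
Proof. by move=> k_lt; rewrite /cnth modn_small. Qed.

Lemma cnth_addn_size (s : seq (int * int)) k : cnth s (k + size s) = cnth s k.
Proof. by rewrite /cnth modnDr. Qed.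

Lemma char_matrix_arc (s : seq (int * int)) a d :
  char_matrix s -> (d < size s)%N ->
  `|det2 (cnth s a) (cnth s (a + d))| = 1 -> char_matrix (arc s a d.+1).
Proof.
move=> cm_s d_lt chord k; rewrite /arc size_mkseq ltnS => k_le.
rewrite nth_mkseq ?ltnS //.
have [k_lt | k_eq] := ltnP k d.
  rewrite modn_small ?ltnS // nth_mkseq ?ltnS // addnS.
  by apply: char_matrix_cnth => //; lia.
have -> : k = d by lia.
by rewrite modnn nth_mkseq // addn0 det2C.
Qed.

Lemma drop_take_arc (s : seq (int * int)) i j : (i <= j < size s)%N ->
  drop i (take j.+1 s) = arc s i (j - i).+1.
Proof.
move=> /andP[ij js]; apply: (@eq_from_nth (int * int) (0, 0)).
  by rewrite size_drop size_takel // /arc size_mkseq; lia.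
rewrite size_drop size_takel // => k k_lt.
rewrite nth_drop nth_take /arc ?nth_mkseq /cnth ?modn_small //; lia.
Qed.

Lemma drop_cat_take_arc (s : seq (int * int)) i j : (i < j < size s)%N ->
  drop j s ++ take i.+1 s = arc s j (size s - j + i).+1.
Proof.
move=> /andP[ij js]; have i_lt := leq_trans ij (ltnW js).
apply: (@eq_from_nth (int * int) (0, 0)).
  by rewrite size_cat size_drop size_takel // /arc size_mkseq addnS.
rewrite size_cat size_drop size_takel //.
move=> k k_lt; rewrite nth_cat size_drop /arc nth_mkseq; last lia.
rewrite /cnth; case: ltnP => k_j.
  by rewrite nth_drop modn_small //; lia.
have -> : (j + k = (k - (size s - j)) + size s)%N by lia.
by rewrite modnDr modn_small ?nth_take //; lia.
Qed.

Definition is_splitting_diagonal (lam : seq (int * int)) (i j : nat) : Prop :=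
  [/\ (i < j < size lam)%N, edges_disjoint (size lam) i j,
      `|det2 (nth (0, 0) lam i) (nth (0, 0) lam j)| = 1,
      char_matrix (drop i (take j.+1 lam)) &
      char_matrix (drop j lam ++ take i.+1 lam)].

Lemma diagonal_is_splitting (lam : seq (int * int)) i j :
  char_matrix lam -> (i < j < size lam)%N -> edges_disjoint (size lam) i j ->
  `|det2 (nth (0, 0) lam i) (nth (0, 0) lam j)| = 1 ->
  is_splitting_diagonal lam i j.
Proof.
move=> cm_lam /andP[ij j_lt] disj chord.
split=> //; first by rewrite ij.
  rewrite drop_take_arc ?(ltnW ij) //.
  apply: char_matrix_arc => //; first lia.
  by rewrite subnKC ?(ltnW ij) // !cnth_small //; lia.
rewrite drop_cat_take_arc ?ij //; apply: char_matrix_arc => //; first lia.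
have -> : (j + (size lam - j + i) = i + size lam)%N by lia.
by rewrite cnth_addn_size det2C !cnth_small //; lia.
Qed.

Lemma splitting_diagonal_of_chord (lam : seq (int * int)) a d :
  char_matrix lam -> (2 <= d <= size lam - 2)%N ->
  `|det2 (cnth lam a) (cnth lam (a + d))| = 1 ->
  exists i j, is_splitting_diagonal lam i j.
Proof.
move=> cm_lam /andP[d_ge d_le].
have lam_gt0 : (0 < size lam)%N by lia.
have x_lt : (a %% size lam < size lam)%N by rewrite ltn_pmod.
have -> : cnth lam (a + d) = cnth lam (a %% size lam + d).
  by rewrite /cnth modnDml.
have -> : cnth lam a = cnth lam (a %% size lam) by rewrite /cnth modn_mod.
move: (a %% size lam)%N x_lt => x x_lt chord.
have [xd_lt | xd_ge] := ltnP (x + d) (size lam).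
  exists x, (x + d)%N; apply: diagonal_is_splitting => //; first lia.
    by rewrite /edges_disjoint; lia.
  by rewrite -!cnth_small.
rewrite -(subnK xd_ge) cnth_addn_size in chord.
exists (x + d - size lam)%N, x; apply: diagonal_is_splitting => //; first lia.
  by rewrite /edges_disjoint; lia.
by rewrite det2C -!cnth_small //; lia.
Qed.

Theorem lemma4p5 (m : nat) (lam : seq (int * int)) :
  (4 < m)%N -> size lam = m -> char_matrix lam ->
  exists i j : nat,
    [/\ (i < j < m)%N, edges_disjoint m i j,
        `|det2 (nth (0, 0) lam i) (nth (0, 0) lam j)| = 1,
        char_matrix (drop i (take j.+1 lam)) &
        char_matrix (drop j lam ++ take i.+1 lam)].
Proof.
move=> m_gt4 size_lam cm_lam; subst m.
suff [i [j diag]] : exists i j, is_splitting_diagonal lam i j by exists i, j.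
have lam_gt0 : (0 < size lam)%N by lia.
have [i i_lt max_i] := exists_nth_argmax (0, 0) normv lam_gt0.
pose a := (i + (size lam).-1)%N.
have top k : normv (cnth lam k) <= normv (cnth lam a.+1).
  by rewrite {2}/cnth -addnS prednK // modnDr modn_small // max_i // ltn_pmod.
have adj k := @char_matrix_cnth lam k lam_gt0 cm_lam.
have := det2_outer_le1 (adj a) (adj a.+1) (top a) (top a.+2).
have [collinear _ | noncollinear le1] :=
  eqVneq (det2 (cnth lam a) (cnth lam a.+2)) 0.
  apply: (@splitting_diagonal_of_chord _ a 3) => //; first lia.
  by rewrite addn3 (det2_collinear_outer _ (adj a) (adj a.+1) collinear) adj.
apply: (@splitting_diagonal_of_chord _ a 2) => //; first lia.
by rewrite addn2; lia.
Qed.
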